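(* Let $p\in(1,\infty)$, let $X$ be a Banach space and $(Y,d_Y)$ a metric space, and suppose $X$ coarse Lipschitz embeds into $Y$. If $Y$ has property HFC$_{p,d}$ (resp. HIC$_{p,d}$, resp. HC$_{p,d}$), then $X$ has property HFC$_{p,d}$ (resp. HIC$_{p,d}$, resp. HC$_{p,d}$).
   Context: Notation: for infinite $\mathbb M\subseteq\mathbb N$ and $k\in\mathbb N$, $[\mathbb M]^k$ is the set of $\bar n=(n_1,\dots,n_k)\in\mathbb M^k$ with $n_1<\dots<n_k$, with Hamming distance $d_{\mathbb H}(\bar n,\bar m)=|\{j:n_j\ne m_j\}|$; $[\mathbb M]^\omega$ is the set of infinite subsets of $\mathbb M$; $I_k(\mathbb M)=\{(\bar n,\bar m): n_1<m_1<\dots<n_k<m_k\}$; $H_j(\mathbb M)=\{(\bar n,\bar m)\in([\mathbb M]^k)^2: n_i=m_i\ (i\ne j),\ n_j<m_j\}$. For a metric space $(M,d)$, $p\in(1,\infty)$, $\lambda>0$, and a Lipschitz $f:([\mathbb N]^k,d_{\mathbb H})\to M$, put $\alpha_j=\sup_{(\bar n,\bar m)\in H_j(\mathbb N)}d(f(\bar n),f(\bar m))$. $M$ has $\lambda$-HFC$_{p,d}$ (resp. $\lambda$-HIC$_{p,d}$) if for every $k$ and every such $f$ there is $\mathbb M\in[\mathbb N]^\omega$ with $d(f(\bar n),f(\bar m))\le\lambda(\sum_{j=1}^k\alpha_j^p)^{1/p}$ for all $\bar n,\bar m\in[\mathbb M]^k$ (resp. all $(\bar n,\bar m)\in I_k(\mathbb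 M)$). $M$ has $\lambda$-HC$_{p,d}$ if for every $k$ and every such $f$ there are $\bar n,\bar m\in[\mathbb N]^k$ with $\bar n\cap\bar m=\varnothing$ (as sets) and $d(f(\bar n),f(\bar m))\le\lambda(\sum_{j=1}^k\alpha_j^p)^{1/p}$. Property HFC$_{p,d}$ (etc.) means $\lambda$-HFC$_{p,d}$ (etc.) for some $\lambda>0$. A map $\varphi:X\to Y$ is a coarse Lipschitz embedding if there are $A,B,C,D\in(0,\infty)$ with $\rho_\varphi(t)\ge At-B$ and $\omega_\varphi(t)\le Ct+D$ for all $t\ge0$, where $\rho_\varphi(t)=\inf\{d_Y(\varphi(x),\varphi(y)):\|x-y\|\ge t\}$ and $\omega_\varphi(t)=\sup\{d_Y(\varphi(x),\varphi(y)):\|x-y\|\le t\}$. *)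

From HB Require Import structures.
From mathcomp Require Import all_boot all_order all_algebra.
From mathcomp Require Import all_classical all_reals all_analysis.
Set Implicit Arguments. Unset Strict Implicit. Unset Printing Implicit Defensive.
Import Order.TTheory GRing.Theory Num.Theory.
Import numFieldNormedType.Exports.
Local Open Scope classical_set_scope.
Local Open Scope ring_scope.

Definition is_metric (R : realType) (M : Type) (d : M -> M -> R) : Prop :=
  [/\ forall x y, 0 <= d x y,
      forall x y, d x y = 0 <-> x = y,
      forall x y, d x y = d y x &
      forall x y z, d x z <= d x y + d y z].

(* n : 'I_k -> nat represents (n_1,...,n_k); it is in [MM]^k iff strictly
   increasing with all entries in MM. *)
Definition in_kset (k : nat) (MM : set nat) (n : 'I_k -> nat) : Prop :=
  (forall i j : 'I_k, (i < j)%N -> (n i < n j)%N) /\ (forall i, MM (n i)).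

Definition dH (R : realType) (k : nat) (n m : 'I_k -> nat) : R :=
  (#|[set j : 'I_k | n j != m j]|)%:R.

Definition lipschitz_H (R : realType) (M : Type) (d : M -> M -> R) (k : nat)
  (f : ('I_k -> nat) -> M) : Prop :=
  exists L : R, forall n m, in_kset setT n -> in_kset setT m ->
    d (f n) (f m) <= L * dH R n m.

Definition in_H (k : nat) (MM : set nat) (j : 'I_k) (n m : 'I_k -> nat) : Prop :=
  [/\ in_kset MM n, in_kset MM m, (forall i, i != j -> n i = m i) & (n j < m j)%N].

Definition in_I (k : nat) (MM : set nat) (n m : 'I_k -> nat) : Prop :=
  [/\ in_kset MM n, in_kset MM m,
      (forall i : 'I_k, (n i < m i)%N) &
      (forall i j : 'I_k, nat_of_ord j = (nat_of_ord i).+1 -> (m i < n j)%N)].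

Definition alphaH (R : realType) (M : Type) (d : M -> M -> R) (k : nat)
  (f : ('I_k -> nat) -> M) (j : 'I_k) : R :=
  sup [set r | exists n m, in_H setT j n m /\ r = d (f n) (f m)].

Definition alpha_pnorm (R : realType) (M : Type) (d : M -> M -> R) (p : R)
  (k : nat) (f : ('I_k -> nat) -> M) : R :=
  (\sum_(j < k) (alphaH d f j) `^ p) `^ p^-1.

Definition lam_HFC (R : realType) (M : Type) (d : M -> M -> R) (p lam : R) : Prop :=
  forall (k : nat) (f : ('I_k -> nat) -> M), lipschitz_H d f ->
    exists MM : set nat, infinite_set MM /\
      forall n m, in_kset MM n -> in_kset MM m ->
        d (f n) (f m) <= lam * alpha_pnorm d p f.

Definition lam_HIC (R : realType) (M : Type) (d : M -> M -> R) (p lam : R) : Prop :=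
  forall (k : nat) (f : ('I_k -> nat) -> M), lipschitz_H d f ->
    exists MM : set nat, infinite_set MM /\
      forall n m, in_I MM n m ->
        d (f n) (f m) <= lam * alpha_pnorm d p f.

Definition lam_HC (R : realType) (M : Type) (d : M -> M -> R) (p lam : R) : Prop :=
  forall (k : nat) (f : ('I_k -> nat) -> M), lipschitz_H d f ->
    exists n m, [/\ in_kset setT n, in_kset setT m,
      (forall i j : 'I_k, n i != m j) &
      d (f n) (f m) <= lam * alpha_pnorm d p f].

Definition HFC (R : realType) (M : Type) (d : M -> M -> R) (p : R) : Prop :=
  exists lam : R, 0 < lam /\ lam_HFC d p lam.
Definition HIC (R : realType) (M : Type) (d : M -> M -> R) (p : R) : Prop :=
  exists lam : R, 0 < lam /\ lam_HIC d p lam.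
Definition HC (R : realType) (M : Type) (d : M -> M -> R) (p : R) : Prop :=
  exists lam : R, 0 < lam /\ lam_HC d p lam.

Definition normdist (R : realType) (X : normedModType R) (x y : X) : R := `|x - y|.

(* Coarse Lipschitz embedding, with rho/omega unfolded pointwise:
   rho(t) >= A t - B  iff  ||x-y|| >= t -> d(phi x, phi y) >= A t - B (inf over
   the empty set being +oo), and omega(t) <= C t + D  iff
   ||x-y|| <= t -> d(phi x, phi y) <= C t + D. *)
Definition coarse_lipschitz_embedding (R : realType) (X : normedModType R)
  (Y : Type) (dY : Y -> Y -> R) (phi : X -> Y) : Prop :=
  exists A B C D : R, [/\ 0 < A, 0 < B, 0 < C, 0 < D &
    forall t : R, 0 <= t -> forall x y : X,
      (t <= `|x - y| -> A * t - B <= dY (phi x) (phi y)) /\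
      (`|x - y| <= t -> dY (phi x) (phi y) <= C * t + D)].

(* Let phi : X -> Y satisfy A|x - x'| - B <= dY(phi x, phi x') <= C|x - x'| + D,
   let f : [N]^k -> X be Lipschitz and N = (sum_j alpha_j(f)^p)^(1/p).
   - If N = 0, every alpha_j(f) vanishes, so f is invariant along every pair
     of H_j(N), hence constant on [N]^k, and all the estimates are trivial.
   - Otherwise rescale: g = phi o (s f) with s = (k^(1/p) D + B/lam)/(C N).
     The upper bound gives alpha_j(g) <= C s alpha_j(f) + D, and the choice of s
     makes the additive D harmless in l_p, so ||alpha(g)||_p <= 4 C s N.  If g
     satisfies the lam-estimate at (n, m), the lower bound gives
     A s |f n - f m| - B <= 4 lam C s N, and since B <= lam C s N we get
     |f n - f m| <= (5 lam C / A) N.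
   Thus a lam-property of Y yields the (5 lam C / A)-property of X, with the
   same infinite set MM (HFC, HIC) or the same pair (HC). *)

From HB Require Import structures.
From mathcomp Require Import all_boot all_order all_algebra.
From mathcomp Require Import all_classical all_reals all_analysis.
From mathcomp Require Import zify ring.
Import Order.TTheory GRing.Theory Num.Theory.
Import numFieldNormedType.Exports.
Local Open Scope ring_scope.

Lemma in_H_nonempty {k : nat} (j : 'I_k) : exists n m, in_H setT j n m.
Proof.
exists (fun i : 'I_k => (2 * i)%N), (fun i : 'I_k => (2 * i + (i == j))%N).
split.
- by split => // i i' ii'; lia.
- split => // i i' ii'; case: (i == j); case: (i' == j) => /=; lia.
- by move=> i /negbTE ->; rewrite addn0.
- by rewrite eqxx; lia.
Qed.

Definition raise_from {k : nat} (n : 'I_k -> nat) (K l : nat) : 'I_k -> nat :=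
  fun i => if (i < l)%N then n i else (K + i)%N.

Section RaiseFrom.
Context {k : nat} {n : 'I_k -> nat} {K : nat}.
Hypotheses (n_inc : in_kset setT n) (n_lt_K : forall i, (n i < K)%N).

Lemma raise_from_kset l : in_kset setT (raise_from n K l).
Proof.
split=> // i j ij; rewrite /raise_from.
have := n_lt_K i; have := proj1 n_inc i j ij.
by case: ifP; case: ifP => *; lia.
Qed.

Lemma raise_from_step {l : nat} (lk : (l < k)%N) :
  in_H setT (Ordinal lk) (raise_from n K l.+1) (raise_from n K l).
Proof.
split; try exact: raise_from_kset.
- move=> i /eqP ne; rewrite /raise_from ltnS leq_eqVlt.
  have -> : (nat_of_ord i == l) = false by apply/eqP => e; apply: ne; apply: val_inj.
  by [].
- by rewrite /raise_from /= ltnSn ltnn; have := n_lt_K (Ordinal lk); lia.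
Qed.
End RaiseFrom.

(* A map on [N]^k that takes equal values on every pair of some H_j(N) is
   constant: raising the entries of n one by one from the top moves n to
   (K, K+1, ..., K+k-1) through H-pairs, and the same holds for m. *)
Lemma H_invariant_const (T : Type) k (f : ('I_k -> nat) -> T) :
  (forall j n m, in_H setT j n m -> f n = f m) ->
  forall n m, in_kset setT n -> in_kset setT m -> f n = f m.
Proof.
move=> f_inv.
have to_top n K : in_kset setT n -> (forall i, (n i < K)%N) ->
    f n = f (fun i => (K + i)%N).
  move=> n_inc n_lt_K.
  have raise l : (l <= k)%N -> f (raise_from n K l) = f (raise_from n K 0).
    elim: l => [//|l IH] lk.
    by rewrite -IH ?(ltnW lk) //; apply: f_inv (raise_from_step n_inc n_lt_K lk).
  have := raise k (leqnn k); rewrite /raise_from.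
  by under eq_fun => i do rewrite ltn_ord.
move=> n m n_inc m_inc.
pose K := (\max_(i < k) n i + \max_(i < k) m i).+1.
rewrite (to_top n K n_inc) ?(to_top m K m_inc) // => i; rewrite ltnS.
- exact: leq_trans (leq_bigmax i) (leq_addl _ _).
- exact: leq_trans (leq_bigmax i) (leq_addr _ _).
Qed.

(* The Hamming constant alpha_j(f) is a supremum over the nonempty set H_j(N);
   for a Lipschitz f it is bounded by L k, so it is a genuine upper bound. *)
Section HammingConstants.
Context {R : realType} {M : Type} {d : M -> M -> R} {k : nat}
  {f : ('I_k -> nat) -> M}.

Lemma alphaH_le (j : 'I_k) (c : R) :
  (forall n m, in_H setT j n m -> d (f n) (f m) <= c) -> alphaH d f j <= c.
Proof.
move=> bound_c; apply: ge_sup; last by move=> r [n [m [Hnm ->]]]; apply: bound_c.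
by have [n [m Hnm]] := in_H_nonempty j; exists (d (f n) (f m)), n, m.
Qed.

Hypotheses (d_ge0 : forall x y, 0 <= d x y) (f_lip : lipschitz_H d f).

Lemma alphaH_ub {j : 'I_k} {n m : 'I_k -> nat} :
  in_H setT j n m -> d (f n) (f m) <= alphaH d f j.
Proof.
move=> Hnm; apply: sup_upper_bound; last by exists n, m.
split; first by exists (d (f n) (f m)), n, m.
have [L HL] := f_lip; exists (`|L| * k%:R) => _ [n' [m' [[Hn Hm _ _] ->]]].
apply: (le_trans (HL n' m' Hn Hm)); apply: (le_trans (ler_norm _)).
rewrite normrM [`|dH _ _ _|]ger0_norm ?ler0n //; apply: ler_wpM2l => //.
by rewrite ler_nat -[leqRHS]card_ord max_card.
Qed.

Lemma alphaH_ge0 (j : 'I_k) : 0 <= alphaH d f j.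
Proof.
have [n [m Hnm]] := in_H_nonempty j.
exact: le_trans (d_ge0 _ _) (alphaH_ub Hnm).
Qed.

End HammingConstants.

Lemma alphaH0_const {R : realType} {M : Type} {d : M -> M -> R} {k : nat}
  {f : ('I_k -> nat) -> M} :
  (forall x y, 0 <= d x y) -> (forall x y, d x y = 0 -> x = y) ->
  lipschitz_H d f -> (forall j, alphaH d f j = 0) ->
  forall n m, in_kset setT n -> in_kset setT m -> f n = f m.
Proof.
move=> d_ge0 d_sep f_lip alpha0; apply: H_invariant_const => j n m Hnm.
apply: d_sep; apply/eqP; rewrite eq_le d_ge0 andbT -(alpha0 j).
exact (alphaH_ub f_lip Hnm).
Qed.

Definition lp_norm {R : realType} (p : R) {k : nat} (a : 'I_k -> R) : R :=
  (\sum_(j < k) a j `^ p) `^ p^-1.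

Lemma alpha_pnormE {R : realType} {M : Type} (d : M -> M -> R) (p : R) {k : nat}
  (f : ('I_k -> nat) -> M) : alpha_pnorm d p f = lp_norm p (alphaH d f).
Proof. by []. Qed.

(* (x + y)^p <= 2^p (x^p + y^p): bound the sum by twice the larger term. *)
Lemma powR_addr_le {R : realType} {p x y : R} : 0 <= p -> 0 <= x -> 0 <= y ->
  (x + y) `^ p <= 2 `^ p * (x `^ p + y `^ p).
Proof.
move=> p0 x0 y0.
wlog xy : x y x0 y0 / x <= y.
  move=> W; case: (leP x y) => [|/ltW] xy; first exact: W.
  by rewrite addrC [_ `^ p + _]addrC; apply: W.
apply: (@le_trans _ _ ((2 * y) `^ p)).
  apply: ge0_ler_powR; rewrite ?nnegrE ?addr_ge0 ?mulr_ge0 //.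
  by rewrite mulr2n mulrDl mul1r lerD2r.
by rewrite powRM // ler_wpM2l ?powR_ge0 // lerDr powR_ge0.
Qed.

Section LpNorm.
Context {R : realType} {p : R}.
Hypothesis p_ge1 : 1 <= p.

Let p_gt0 : 0 < p. Proof. exact: lt_le_trans ltr01 p_ge1. Qed.

Lemma powRK (x : R) : 0 <= x -> (x `^ p) `^ p^-1 = x.
Proof. by move=> x0; rewrite -powRrM mulfV ?gt_eqF ?powRr1. Qed.

Lemma powRVK (x : R) : 0 <= x -> (x `^ p^-1) `^ p = x.
Proof. by move=> x0; rewrite -powRrM mulVf ?gt_eqF ?powRr1. Qed.

Lemma lp_norm_eq0 {k : nat} {a : 'I_k -> R} :
  (forall j, 0 <= a j) -> lp_norm p a = 0 -> forall j, a j = 0.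
Proof.
move=> a0 /powR_eq0_eq0 /psumr_eq0P sum0 j.
by apply: (@powR_eq0_eq0 _ _ p); apply: sum0 => // i _; exact: powR_ge0.
Qed.

Lemma sum_powR_affine_le {k : nat} {a b : 'I_k -> R} {c D : R} :
  0 <= c -> 0 <= D -> (forall j, 0 <= a j) -> (forall j, 0 <= b j) ->
  (forall j, b j <= c * a j + D) ->
  k%:R * D `^ p <= c `^ p * \sum_(j < k) a j `^ p ->
  \sum_(j < k) b j `^ p <= (4 * c) `^ p * \sum_(j < k) a j `^ p.
Proof.
move=> c0 D0 a0 b0 b_le kD; set S := \sum_(j < k) a j `^ p in kD *.
have S0 : 0 <= S by apply: sumr_ge0 => j _; exact: powR_ge0.
have p0 := ltW p_gt0.
have sum_b : \sum_(j < k) b j `^ p <= 2 `^ p * (c `^ p * S + k%:R * D `^ p).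
  have -> : k%:R * D `^ p = \sum_(j < k) D `^ p.
    by rewrite sumr_const card_ord mulr_natl.
  rewrite /S mulr_sumr -big_split mulr_sumr /=.
  apply: ler_sum => j _; rewrite -powRM //.
  apply: le_trans (powR_addr_le p0 (mulr_ge0 c0 (a0 j)) D0).
  by apply: ge0_ler_powR; rewrite ?nnegrE ?addr_ge0 ?mulr_ge0.
apply: le_trans sum_b _.
rewrite (_ : 4 * c = 2 * 2 * c); last by rewrite -natrM.
rewrite !powRM ?mulr_ge0 // -!mulrA ler_wpM2l ?powR_ge0 //.
have two_p : 2 <= 2 `^ p by apply: le1r_powR; rewrite ?ler1n.
have cS0 : 0 <= c `^ p * S by rewrite mulr_ge0 ?powR_ge0.
apply: le_trans (_ : 2 * (c `^ p * S) <= _).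
  by rewrite mulr2n mulrDl mul1r lerD2l.
by rewrite ler_wpM2r.
Qed.

Lemma lp_norm_affine_le {k : nat} (a b : 'I_k -> R) (c D : R) :
  0 <= c -> 0 <= D -> (forall j, 0 <= a j) -> (forall j, 0 <= b j) ->
  (forall j, b j <= c * a j + D) -> k%:R `^ p^-1 * D <= c * lp_norm p a ->
  lp_norm p b <= 4 * c * lp_norm p a.
Proof.
move=> c0 D0 a0 b0 b_le kD_le.
have p0 := ltW p_gt0.
have S0 : 0 <= \sum_(j < k) a j `^ p by apply: sumr_ge0 => j _; exact: powR_ge0.
have kD : k%:R * D `^ p <= c `^ p * \sum_(j < k) a j `^ p.
  have := @ge0_ler_powR _ p p0 (k%:R `^ p^-1 * D) (c * lp_norm p a).
  rewrite !nnegrE !powRM ?mulr_ge0 ?powR_ge0 // powRVK ?powRVK //.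
  by apply.
have sum_b4 := sum_powR_affine_le c0 D0 a0 b0 b_le kD.
rewrite /lp_norm.
apply: le_trans (_ : ((4 * c) `^ p * \sum_(j < k) a j `^ p) `^ p^-1 <= _).
  apply: ge0_ler_powR sum_b4; rewrite ?invr_ge0 ?nnegrE ?mulr_ge0 ?powR_ge0 //.
  by apply: sumr_ge0 => j _; exact: powR_ge0.
by rewrite powRM ?powR_ge0 // powRK ?mulr_ge0.
Qed.

End LpNorm.

Lemma in_kset_setT {k : nat} {MM : set nat} {n : 'I_k -> nat} :
  in_kset MM n -> in_kset setT n.
Proof. by case. Qed.

Lemma normdist_ge0 {R : realType} {X : normedModType R} (x y : X) :
  0 <= normdist x y.
Proof. exact: normr_ge0. Qed.

Lemma normdist_sep {R : realType} {X : normedModType R} (x y : X) :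
  normdist x y = 0 -> x = y.
Proof. by move=> /eqP; rewrite normr_eq0 subr_eq0 => /eqP. Qed.

Lemma scaled_dist {R : realType} {X : normedModType R} (s : R) (x y : X) :
  0 <= s -> `|s *: x - s *: y| = s * `|x - y|.
Proof. by move=> s0; rewrite -scalerBr normrZ ger0_norm. Qed.

Section Rescaling.
Context {R : realType} {p : R} {X : normedModType R} {Y : Type}
  {dY : Y -> Y -> R} {phi : X -> Y} {A B C D : R}.
Hypotheses (p_ge1 : 1 <= p)
  (dY_ge0 : forall y y', 0 <= dY y y') (dY_refl : forall y, dY y y = 0)
  (A_gt0 : 0 < A) (B_gt0 : 0 < B) (C_gt0 : 0 < C) (D_ge0 : 0 <= D)
  (phi_lower : forall x x', A * `|x - x'| - B <= dY (phi x) (phi x'))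
  (phi_upper : forall x x', dY (phi x) (phi x') <= C * `|x - x'| + D).

(* phi o (s f) is Lipschitz for the Hamming distance: when n <> m the additive
   constant D is absorbed since d_H(n, m) >= 1. *)
Lemma rescaled_lipschitz {k : nat} {f : ('I_k -> nat) -> X} {s : R} :
  0 <= s -> lipschitz_H (@normdist R X) f ->
  lipschitz_H dY (fun n => phi (s *: f n)).
Proof.
move=> s0 [L HL]; exists (C * s * L + D) => n m Hn Hm.
have f_le : `|f n - f m| <= L * dH R n m := HL n m Hn Hm.
have [dH0|dH_neq0] := eqVneq (dH R n m) 0.
  have -> : f n = f m.
    by apply/eqP; rewrite -subr_eq0 -normr_le0 -(mulr0 L) -dH0.
  by rewrite dY_refl dH0 mulr0.
have dH_ge1 : 1 <= dH R n m by move: dH_neq0; rewrite /dH pnatr_eq0 -lt0n ler1n.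
apply: le_trans (phi_upper _ _) _; rewrite scaled_dist // mulrDl.
apply: lerD; last by rewrite ler_peMr.
by rewrite -!mulrA; apply: ler_wpM2l; [exact: ltW | exact: ler_wpM2l].
Qed.

Lemma rescaled_alphaH {k : nat} {f : ('I_k -> nat) -> X} {s : R} (j : 'I_k) :
  0 <= s -> lipschitz_H (@normdist R X) f ->
  alphaH dY (fun n => phi (s *: f n)) j <= C * s * alphaH (@normdist R X) f j + D.
Proof.
move=> s0 f_lip; apply: alphaH_le => n m Hnm.
apply: le_trans (phi_upper _ _) _; rewrite scaled_dist // lerD2r mulrA.
apply: ler_wpM2l; first exact: mulr_ge0 (ltW C_gt0) s0.
exact (alphaH_ub f_lip Hnm).
Qed.

Lemma rescaled_estimate {k : nat} {f : ('I_k -> nat) -> X} {lam : R} :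
  0 < lam -> lipschitz_H (@normdist R X) f ->
  exists g : ('I_k -> nat) -> Y, lipschitz_H dY g /\
    forall n m, in_kset setT n -> in_kset setT m ->
      dY (g n) (g m) <= lam * alpha_pnorm dY p g ->
      normdist (f n) (f m) <= 5 * lam * C / A * alpha_pnorm (@normdist R X) p f.
Proof.
move=> lam_gt0 f_lip.
rewrite alpha_pnormE; set N := lp_norm p _.
have N_ge0 : 0 <= N by exact: powR_ge0.
have [N0|N_gt0] : N = 0 \/ 0 < N.
  by move: N_ge0; rewrite le_eqVlt => /orP[/eqP|]; auto.
  have f_const := alphaH0_const normdist_ge0 normdist_sep f_lip
    (lp_norm_eq0 (alphaH_ge0 normdist_ge0 f_lip) N0).
  exists (fun n => phi (1 *: f n)); split; first exact: rescaled_lipschitz.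
  move=> n m Hn Hm _.
  by rewrite (f_const n m Hn Hm) /normdist subrr normr0 N0 mulr0.
pose s := (k%:R `^ p^-1 * D + B / lam) / (C * N).
have CsN : C * s * N = k%:R `^ p^-1 * D + B / lam.
  by rewrite /s; field; rewrite !gt_eqF.
have s_gt0 : 0 < s.
  by rewrite divr_gt0 ?mulr_gt0 ?ltr_wpDl ?mulr_ge0 ?powR_ge0 ?divr_gt0.
exists (fun n => phi (s *: f n)).
split; first exact: rescaled_lipschitz (ltW s_gt0) f_lip.
have g_norm : alpha_pnorm dY p (fun n => phi (s *: f n)) <= 4 * (C * s) * N.
  rewrite alpha_pnormE; apply: (lp_norm_affine_le p_ge1 _ _ (C * s) D) => //.
  - by rewrite mulr_ge0 ?ltW.
  - exact: alphaH_ge0 normdist_ge0 f_lip.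
  - exact: alphaH_ge0 dY_ge0 (rescaled_lipschitz (ltW s_gt0) f_lip).
  - by move=> j; apply: rescaled_alphaH j (ltW s_gt0) f_lip.
  - by rewrite -/N CsN lerDl divr_ge0 ?ltW.
have B_le : B <= lam * (C * s * N).
  rewrite CsN mulrDr [lam * (B / lam)]mulrC divfK ?gt_eqF // lerDr.
  exact: mulr_ge0 (ltW lam_gt0) (mulr_ge0 (powR_ge0 _ _) D_ge0).
move=> n m _ _ g_le.
have lower := le_trans (phi_lower (s *: f n) (s *: f m))
  (le_trans g_le (ler_wpM2l (ltW lam_gt0) g_norm)).
rewrite scaled_dist in lower; last exact: ltW.
rewrite lerBlDr mulrA in lower.
clearbody s N.
rewrite -(ler_pM2l (mulr_gt0 A_gt0 s_gt0)); apply: le_trans lower _.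
have -> : A * s * (5 * lam * C / A * N) =
    lam * (4 * (C * s) * N) + lam * (C * s * N).
  by field; rewrite gt_eqF.
by rewrite lerD2l.
Qed.

Lemma HFC_pullback {lam : R} : 0 < lam -> lam_HFC dY p lam ->
  lam_HFC (@normdist R X) p (5 * lam * C / A).
Proof.
move=> lam_gt0 HFC_Y k f f_lip.
have [g [g_lip g_est]] := rescaled_estimate lam_gt0 f_lip.
have [MM [MM_inf MM_est]] := HFC_Y k g g_lip.
exists MM; split; first exact: MM_inf.
move=> n m Hn Hm.
exact: g_est n m (in_kset_setT Hn) (in_kset_setT Hm) (MM_est n m Hn Hm).
Qed.

Lemma HIC_pullback {lam : R} : 0 < lam -> lam_HIC dY p lam ->
  lam_HIC (@normdist R X) p (5 * lam * C / A).
Proof.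
move=> lam_gt0 HIC_Y k f f_lip.
have [g [g_lip g_est]] := rescaled_estimate lam_gt0 f_lip.
have [MM [MM_inf MM_est]] := HIC_Y k g g_lip.
exists MM; split; first exact: MM_inf.
move=> n m nm_inter; have [Hn Hm _ _] := nm_inter.
exact: g_est n m (in_kset_setT Hn) (in_kset_setT Hm) (MM_est n m nm_inter).
Qed.

Lemma HC_pullback {lam : R} : 0 < lam -> lam_HC dY p lam ->
  lam_HC (@normdist R X) p (5 * lam * C / A).
Proof.
move=> lam_gt0 HC_Y k f f_lip.
have [g [g_lip g_est]] := rescaled_estimate lam_gt0 f_lip.
have [n [m [Hn Hm disjoint g_le]]] := HC_Y k g g_lip.
exists n, m; split; [exact: Hn | exact: Hm | exact: disjoint |].
exact: g_est n m Hn Hm g_le.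
Qed.

End Rescaling.

Theorem mainTheorem2 (R : realType) (p : R) (X : completeNormedModType R)
  (Y : Type) (dY : Y -> Y -> R) :
  1 < p -> is_metric dY ->
  (exists phi : X -> Y, coarse_lipschitz_embedding dY phi) ->
  [/\ HFC dY p -> HFC (@normdist R X) p,
      HIC dY p -> HIC (@normdist R X) p &
      HC dY p -> HC (@normdist R X) p].
Proof.
move=> /ltW p_ge1 [dY_ge0 dY_eq0 _ _].
move=> [phi [A [B [C [D [A_gt0 B_gt0 C_gt0 D_gt0 phi_bounds]]]]]].
have dY_refl y : dY y y = 0 by apply/dY_eq0.
have D_ge0 := ltW D_gt0.
have phi_lower x x' : A * `|x - x'| - B <= dY (phi x) (phi x').
  by have [lower _] := phi_bounds _ (normr_ge0 (x - x')) x x'; apply: lower.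
have phi_upper x x' : dY (phi x) (phi x') <= C * `|x - x'| + D.
  by have [_ upper] := phi_bounds _ (normr_ge0 (x - x')) x x'; apply: upper.
split=> -[lam [lam_gt0 lam_Y]]; exists (5 * lam * C / A);
  (split; first by rewrite divr_gt0 ?mulr_gt0).
- exact (HFC_pullback p_ge1 dY_ge0 dY_refl A_gt0 B_gt0 C_gt0 D_ge0
    phi_lower phi_upper lam_gt0 lam_Y).
- exact (HIC_pullback p_ge1 dY_ge0 dY_refl A_gt0 B_gt0 C_gt0 D_ge0
    phi_lower phi_upper lam_gt0 lam_Y).
- exact (HC_pullback p_ge1 dY_ge0 dY_refl A_gt0 B_gt0 C_gt0 D_ge0
    phi_lower phi_upper lam_gt0 lam_Y).
Qed.
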